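(* Let $(\vartheta_n)_{n\ge0}$ be a submartingale with $\vartheta_n\in[0,1]$ for all $n$, and let $\vartheta_\infty$ be its almost sure limit. Let $S=\{0,1\}$ and let $\xi_n$ be the random probability measure on $S$ with $\xi_n(\{1\})=\vartheta_n$, $\xi_n(\{0\})=1-\vartheta_n$. If $\boldsymbol X=(X_0,X_1,\dots)$ is a sequence of $S$-valued random variables having $\boldsymbol\xi=(\xi_0,\xi_1,\dots)$ as a product disintegration, then \[ \lim_{n\to\infty}\frac1n\sum_{i=0}^{n-1}\mathbb 1_{\{X_i=1\}}=\vartheta_\infty\quad\text{almost surely.} \]
   Context: A sequence $\boldsymbol\xi$ of random probability measures on $S$ is a product disintegration of $\boldsymbol X$ if, with probability one, $\mathbb{P}[X_0\in A_0,\dots,X_n\in A_n\mid \boldsymbol{\xi}] = \xi_0(A_0)\cdots\xi_n(A_n)$ holds simultaneously for every $n\ge 0$ and all subsets $A_0,\dots,A_n$ of $S$ (conditioning on $\sigma(\boldsymbol\xi)$). *)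

From HB Require Import structures.
From mathcomp Require Import all_boot all_order all_algebra.
From mathcomp Require Import all_classical all_reals all_analysis.
Set Implicit Arguments. Unset Strict Implicit. Unset Printing Implicit Defensive.
Import Order.TTheory GRing.Theory Num.Theory.
Import numFieldNormedType.Exports.
Local Open Scope classical_set_scope.
Local Open Scope ring_scope.

Section Defs.
Context (d : measure_display) (T : measurableType d) (R : realType).

Definition filtration (F : nat -> set (set T)) : Prop :=
  (forall n, sigma_algebra setT (F n)) /\
  (forall n, F n `<=` measurable) /\
  (forall n, F n `<=` F n.+1).

(* theta is a submartingale w.r.t. the filtration F (integrable, adapted, and
   E[theta_{n+1} | F_n] >= theta_n, i.e. the defining integral inequality on
   every F_n-set). *)
Definition submartingale (P : probability T R) (F : nat -> set (set T))
  (theta : nat -> T -> R) : Prop :=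
  filtration F /\
  (forall n, P.-integrable setT (fun w => (theta n w)%:E)) /\
  (forall n (B : set R), measurable B -> F n (theta n @^-1` B)) /\
  (forall n A, F n A ->
     (\int[P]_(w in A) (theta n w)%:E <= \int[P]_(w in A) (theta n.+1 w)%:E)%E).

(* A random probability measure on the finite set S is given by its random mass
   function xi n w : S -> R; xi n w (A) = \sum_(s in A) xi n w s. *)
Definition rmeas (S : finType) (p : S -> R) (A : {set S}) : R :=
  \sum_(s in A) p s.

Definition sigma_of (S : finType) (xi : nat -> T -> S -> R) : set (set T) :=
  smallest (sigma_algebra setT)
    [set E | exists n (A : {set S}) (B : set R),
       measurable B /\ E = (fun w => rmeas (xi n w) A) @^-1` B].

(* xi is a product disintegration of X: for all n, all A_0..A_n subsets of S,
   P[X_0 in A_0, ..., X_n in A_n | sigma(xi)] = xi_0(A_0) ... xi_n(A_n) a.s.,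
   expressed through the defining property of conditional probability. *)
Definition product_disintegration (S : finType) (P : probability T R)
  (X : nat -> T -> S) (xi : nat -> T -> S -> R) : Prop :=
  forall n (A : nat -> {set S}) (B : set T), sigma_of xi B ->
    P (B `&` [set w | forall i, (i <= n)%N -> X i w \in A i]) =
    (\int[P]_(w in B) (\prod_(i < n.+1) rmeas (xi i w) (A i))%:E)%E.

End Defs.

From HB Require Import structures.
From mathcomp Require Import all_boot all_order all_algebra.
From mathcomp Require Import all_classical all_reals all_analysis.
From mathcomp Require Import measurable_realfun zify ring lra.
Import Order.TTheory GRing.Theory Num.Theory.
Import numFieldNormedType.Exports.
Local Open Scope classical_set_scope.
Local Open Scope ring_scope.
Set Implicit Arguments. Unset Strict Implicit. Unset Printing Implicit Defensive.

(* Write Z_i for the indicator of {X_i = 1} and Y_i = Z_i - theta_i.  Then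
   (1/n) sum Z_i = (1/n) sum Y_i + (1/n) sum theta_i, and the second average
   tends to theta_inf by Cesaro's lemma; so it suffices to show that
   (1/n) sum Y_i -> 0 almost surely.  From the submartingale hypothesis only
   the measurability of the theta_n is needed, their convergence being assumed. *)

Section bounded_measurable.
Context d (T : measurableType d) (R : realType).
Implicit Types (f g : T -> R).

Definition bounded_measurable f : Prop :=
  measurable_fun setT f /\ exists M : R, forall w, `|f w| <= M.

Lemma bounded_measurable_cst (c : R) : bounded_measurable (fun _ => c).
Proof. by split; [exact: measurable_cst | exists `|c|]. Qed.

Lemma bounded_measurableD f g : bounded_measurable f -> bounded_measurable g ->
  bounded_measurable (fun w => f w + g w).
Proof.
move=> [mf [M fM]] [mg [N gN]]; split; first exact: measurable_funD.
by exists (M + N) => w; rewrite (le_trans (ler_normD _ _))// lerD.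
Qed.

Lemma bounded_measurableB f g : bounded_measurable f -> bounded_measurable g ->
  bounded_measurable (fun w => f w - g w).
Proof.
move=> [mf [M fM]] [mg [N gN]]; split; first exact: measurable_funB.
by exists (M + N) => w; rewrite (le_trans (ler_normB _ _))// lerD.
Qed.

Lemma bounded_measurableM f g : bounded_measurable f -> bounded_measurable g ->
  bounded_measurable (fun w => f w * g w).
Proof.
move=> [mf [M fM]] [mg [N gN]]; split; first exact: measurable_funM.
by exists (M * N) => w; rewrite normrM ler_pM.
Qed.

Lemma bounded_measurable_sum I (s : seq I) (h : I -> T -> R) :
  (forall i, bounded_measurable (h i)) ->
  bounded_measurable (fun w => \sum_(i <- s) h i w).
Proof.
move=> hb; elim: s => [|i s IHs].
  under eq_fun do rewrite big_nil.
  exact: bounded_measurable_cst.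
under eq_fun do rewrite big_cons.
exact: bounded_measurableD.
Qed.

Lemma bounded_measurable_indic (A : set T) : measurable A ->
  bounded_measurable (\1_A).
Proof.
move=> mA; split; first exact: measurable_indic.
by exists 1 => w; rewrite indicE; case: (w \in A); rewrite ?normr1 ?normr0.
Qed.

Lemma measurable_level g (c : R) : measurable_fun setT g ->
  measurable [set w | c <= g w].
Proof.
by move=> mg; have := mg measurableT _ (measurable_itv `[c, +oo[);
   rewrite setTI preimage_itvcy.
Qed.

End bounded_measurable.

#[global] Hint Resolve bounded_measurable_cst bounded_measurableD
  bounded_measurableB bounded_measurableM bounded_measurable_sum
  bounded_measurable_indic : bounded.
#[global] Hint Extern 0 (bounded_measurable _) => solve [auto with nocore bounded] : core.

Section expectation.
Context d (T : measurableType d) (R : realType) (P : probability T R).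
Implicit Types (f g : T -> R).

Lemma bounded_integrable f : bounded_measurable f -> P.-integrable setT (EFin \o f).
Proof.
move=> [mf [M fM]]; apply: measurable_bounded_integrable => //.
  exact: le_lt_trans (probability_le1 P measurableT) (ltry 1).
exists M; split; first exact: num_real.
by move=> x Mx y _; exact: le_trans (fM y) (ltW Mx).
Qed.

Lemma Rintegral_probability_cst (c : R) : \int[P]_x c = c.
Proof.
by rewrite Rintegral_cst//= (_ : fine (P setT) = 1) ?mulr1 // probability_setT.
Qed.

Lemma Rintegral_indic (A : set T) : measurable A -> (\int[P]_x \1_A x)%:E = P A.
Proof.
move=> mA; rewrite /Rintegral integral_indic// setIT fineK//.
exact: fin_num_measure.
Qed.

Lemma Rintegral_boundedD f g : bounded_measurable f -> bounded_measurable g ->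
  \int[P]_x (f x + g x) = \int[P]_x f x + \int[P]_x g x.
Proof. by move=> bf bg; rewrite RintegralD ?bounded_integrable. Qed.

Lemma Rintegral_boundedB f g : bounded_measurable f -> bounded_measurable g ->
  \int[P]_x (f x - g x) = \int[P]_x f x - \int[P]_x g x.
Proof. by move=> bf bg; rewrite RintegralB ?bounded_integrable. Qed.

Lemma Rintegral_boundedZ (c : R) f : bounded_measurable f ->
  \int[P]_x (c * f x) = c * \int[P]_x f x.
Proof. by move=> bf; rewrite RintegralZl ?bounded_integrable. Qed.

Lemma Rintegral_bounded_sum I (s : seq I) (h : I -> T -> R) :
  (forall i, bounded_measurable (h i)) ->
  \int[P]_x (\sum_(i <- s) h i x) = \sum_(i <- s) \int[P]_x h i x.
Proof.
move=> hb; elim: s => [|i s IHs].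
  under eq_Rintegral do rewrite big_nil.
  by rewrite big_nil Rintegral_probability_cst.
under eq_Rintegral do rewrite big_cons.
by rewrite big_cons Rintegral_boundedD ?IHs.
Qed.

Lemma le_Rintegral_bounded f g : bounded_measurable f -> bounded_measurable g ->
  (forall w, f w <= g w) -> \int[P]_x f x <= \int[P]_x g x.
Proof.
by move=> bf bg fg; apply: le_Rintegral; rewrite ?bounded_integrable.
Qed.

Lemma Rintegral_EFin f : bounded_measurable f ->
  (\int[P]_x (f x)%:E)%E = (\int[P]_x f x)%:E.
Proof.
by move=> bf; rewrite fineK//; apply: integrable_fin_num; rewrite ?bounded_integrable.
Qed.

Lemma integral_setE (B : set T) f : measurable B -> bounded_measurable f ->
  (\int[P]_(w in B) (f w)%:E)%E = (\int[P]_x (\1_B x * f x))%:E.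
Proof.
move=> mB bf; rewrite fineK; last first.
  by apply: integrable_fin_num; rewrite ?bounded_integrable.
rewrite [LHS]integral_mkcond; apply: eq_integral => w _.
by rewrite /patch indicE; case: (w \in B); rewrite ?mul1r ?mul0r.
Qed.

Lemma chebyshev_bounded f (c : R) : 0 < c -> bounded_measurable f ->
  (P [set w | c <= `|f w|]%R <= ((\int[P]_x (f x ^+ 2)) / c ^+ 2)%:E)%E.
Proof.
move=> c0 bf; have mA : measurable [set w | c <= `|f w|].
  by apply: measurable_level; apply: measurableT_comp => //; exact: bf.1.
rewrite -Rintegral_indic// lee_fin ler_pdivlMr ?exprn_gt0// mulrC.
rewrite -Rintegral_boundedZ//; apply: le_Rintegral_bounded => //.
  by under eq_fun do rewrite expr2.
move=> w; rewrite indicE; case: (boolP (w \in _)) => [/set_mem /= cf|_].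
  by rewrite mulr1 -[f w ^+ 2]real_normK ?num_real// !expr2 ler_pM// ltW.
by rewrite /= mulr0 sqr_ge0.
Qed.

End expectation.

Lemma sum_ord_ltn K k : (\sum_(m < K) (m < k : nat))%N = minn K k.
Proof.
elim: K => [|K IHK]; first by rewrite big_ord0 min0n.
by rewrite big_ord_recr /= IHK; case: (ltnP K k) => ?; lia.
Qed.

Lemma eq0_le_invS (R : realType) (a : R) : (forall k, `|a| <= k.+1%:R^-1) -> a = 0.
Proof.
move=> small; apply/eqP/negPn/negP => a0.
have /ltr_add_invr[k] : 0 < `|a| by rewrite normr_gt0.
by rewrite add0r ltNge small.
Qed.

Section staircase_approximation.
Context d (T : measurableType d) (R : realType).

(* The lower approximation of a [0, 1]-valued function g at mesh 1/K,
   written as a combination of indicators of upper level sets of g. *)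
Definition staircase (g : T -> R) (K : nat) (w : T) : R :=
  \sum_(m < K) K%:R^-1 * \1_[set x | m.+1%:R / K%:R <= g x] w.

Section fixed_function.
Variable g : T -> R.
Hypotheses (mg : measurable_fun setT g) (g01 : forall w, 0 <= g w <= 1).

Lemma staircaseE K w : (0 < K)%N ->
  staircase g K w = K%:R^-1 * (Num.truncn (K%:R * g w))%:R.
Proof.
move=> K0; have K0R : 0 < K%:R :> R by rewrite ltr0n.
rewrite /staircase -mulr_sumr; congr (_ * _).
have -> : \sum_(m < K) \1_[set x | m.+1%:R / K%:R <= g x] w =
          (\sum_(m < K) (m < Num.truncn (K%:R * g w) : nat))%N%:R :> R.
  rewrite natr_sum; apply: eq_bigr => m _; rewrite indicE; congr (_%:R).
  by rewrite truncn_gt_nat -ler_pdivrMl// mulrC mem_setE.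
rewrite sum_ord_ltn; congr (_%:R); apply/minn_idPr.
rewrite -[X in (_ <= X)%N](@natrK R K) le_truncn//.
by have /andP[_ g1] := g01 w; rewrite ler_piMr// ltW.
Qed.

Lemma staircase_approx K w : (0 < K)%N ->
  0 <= g w - staircase g K w <= K%:R^-1.
Proof.
move=> K0; have K0R : 0 < K%:R :> R by rewrite ltr0n.
have /andP[g0 _] := g01 w.
have Kg0 : 0 <= K%:R * g w by rewrite mulr_ge0// ltW.
have /andP[trunc_le lt_trunc] := truncn_itv Kg0.
rewrite staircaseE//; set t := Num.truncn _ in trunc_le lt_trunc *.
have -> : g w - K%:R^-1 * t%:R = K%:R^-1 * (K%:R * g w - t%:R).
  by rewrite mulrBr mulKf// gt_eqF.
rewrite mulr_ge0 ?subr_ge0 ?invr_ge0 ?ler0n//=.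
rewrite -[X in _ <= X]mulr1 ler_pM2l ?invr_gt0//.
by move: lt_trunc; rewrite -natr1; lra.
Qed.

Lemma staircase_bounded K : bounded_measurable (staircase g K).
Proof.
apply: bounded_measurable_sum => m; apply: bounded_measurableM => //.
exact/bounded_measurable_indic/measurable_level.
Qed.

Variable P : probability T R.

Lemma Rintegral_staircase K f : bounded_measurable f ->
  \int[P]_x (staircase g K x * f x) =
  \sum_(m < K) K%:R^-1 * \int[P]_x (\1_[set x | m.+1%:R / K%:R <= g x] x * f x).
Proof.
move=> bf; have bl c : bounded_measurable (\1_[set x | c <= g x]).
  exact/bounded_measurable_indic/measurable_level.
under eq_Rintegral do rewrite /staircase mulr_suml.
rewrite Rintegral_bounded_sum//; apply: eq_bigr => m _.
under eq_Rintegral do rewrite -mulrA.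
by rewrite Rintegral_boundedZ.
Qed.

Lemma Rintegral_staircase_gap K f : (0 < K)%N -> bounded_measurable f ->
  (forall w, 0 <= f w <= 1) ->
  0 <= \int[P]_x (g x * f x) - \int[P]_x (staircase g K x * f x) <= K%:R^-1.
Proof.
move=> K0 bf f01; have bs := staircase_bounded K.
have bg : bounded_measurable g.
  by split=> //; exists 1 => w; have /andP[g0 g1] := g01 w; rewrite ger0_norm.
rewrite -Rintegral_boundedB//.
have gap w : 0 <= g w * f w - staircase g K w * f w <= K%:R^-1.
  have /andP[? ?] := staircase_approx w K0; have /andP[? ?] := f01 w.
  rewrite -mulrBl; apply/andP; split; [exact: mulr_ge0|nra].
apply/andP; split.
  rewrite -[X in X <= _](Rintegral_probability_cst P).
  by apply: le_Rintegral_bounded => // w; case/andP: (gap w).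
rewrite -[X in _ <= X](Rintegral_probability_cst P).
by apply: le_Rintegral_bounded => // w; case/andP: (gap w).
Qed.

End fixed_function.

Lemma Rintegral_mul_level_sets (P : probability T R) (g f1 f2 : T -> R) :
  measurable_fun setT g -> (forall w, 0 <= g w <= 1) ->
  bounded_measurable f1 -> (forall w, 0 <= f1 w <= 1) ->
  bounded_measurable f2 -> (forall w, 0 <= f2 w <= 1) ->
  (forall c, \int[P]_x (\1_[set x | c <= g x] x * f1 x) =
             \int[P]_x (\1_[set x | c <= g x] x * f2 x)) ->
  \int[P]_x (g x * f1 x) = \int[P]_x (g x * f2 x).
Proof.
move=> mg g01 bf1 f1_01 bf2 f2_01 same_levels.
apply/eqP; rewrite -subr_eq0; apply/eqP/eq0_le_invS => k.
have same_staircase : \int[P]_x (staircase g k.+1 x * f1 x) =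
                      \int[P]_x (staircase g k.+1 x * f2 x).
  by rewrite !Rintegral_staircase//; apply: eq_bigr => m _; rewrite same_levels.
have /andP[gap1 gap1'] := Rintegral_staircase_gap mg g01 P (ltn0Sn k) bf1 f1_01.
have /andP[gap2 gap2'] := Rintegral_staircase_gap mg g01 P (ltn0Sn k) bf2 f2_01.
rewrite same_staircase in gap1 gap1'.
set e := k.+1%:R^-1 in gap1' gap2' *.
by rewrite ler_norml; apply/andP; split; lra.
Qed.

End staircase_approximation.

Lemma sum_inv_sqr (R : realFieldType) n :
  \sum_(0 <= i < n) (i.+1%:R ^+ 2 : R)^-1 <= 2 - 2 / n.+1%:R.
Proof.
elim: n => [|n IHn]; first by rewrite big_geq // divr1 subrr.
rewrite big_nat_recr //=; apply: le_trans (lerD IHn (lexx _)) _.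
have a0 : 0 < n.+1%:R :> R by rewrite ltr0n.
rewrite -[n.+2]addn1 natrD; set a := n.+1%:R in a0 *.
have a1 : 1 <= a by rewrite /a ler1n.
rewrite -subr_ge0.
have -> : 2 - 2 / (a + 1%:R) - (2 - 2 / a + (a ^+ 2)^-1) =
          (a - 1) / (a ^+ 2 * (a + 1)).
  by field; rewrite !gt_eqF// ?ltr_wpDr.
by rewrite divr_ge0 ?subr_ge0 // mulr_ge0 ?exprn_ge0 ?addr_ge0 // ltW.
Qed.

Lemma nneseries_inv_sqr_lty (R : realType) (c : R) (u : nat -> \bar R) : 0 <= c ->
  (forall k, (0 <= u k <= (c / k.+1%:R ^+ 2)%:E)%E) -> (\sum_(k <oo) u k < +oo)%E.
Proof.
move=> c0 u_le; apply: (@le_lt_trans _ _ (2 * c)%:E); last exact: ltry.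
apply: lime_le; first by apply: is_cvg_nneseries => k _ _; case/andP: (u_le k).
apply: nearW => n; apply: (@le_trans _ _ (\sum_(0 <= i < n) (c / i.+1%:R ^+ 2)%:E)%E).
  by apply: lee_sum => i _; case/andP: (u_le i).
rewrite sumEFin lee_fin -mulr_sumr mulrC ler_wpM2r //.
by apply: le_trans (sum_inv_sqr R n) _; rewrite lerBlDr lerDl divr_ge0.
Qed.

Lemma nat_sqr_bracket n : exists r, (r ^ 2 <= n < r.+1 ^ 2)%N.
Proof.
elim: n => [|n [r /andP[r_le lt_r]]]; first by exists 0%N.
have [n_lt|r_le'] := ltnP n.+1 (r.+1 ^ 2).
  by exists r; rewrite n_lt (leq_trans r_le).
by exists r.+1; rewrite r_le'; move: lt_r r_le'; rewrite !expnS !expn0; nia.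
Qed.

Section cesaro_from_squares.
Context (R : realType) (y : nat -> R).
Hypothesis y1 : forall i, `|y i| <= 1.

(* Between r^2 and (r+1)^2 there are at most 2r terms, so the average at time
   n is controlled by the partial sum at the square below n. *)
Lemma average_between_squares n r m : (r ^ 2 <= n < r.+1 ^ 2)%N -> (0 < r)%N ->
  `|\sum_(i < r ^ 2) y i| <= (r ^ 2)%:R / m.+1%:R ->
  `|n%:R^-1 * \sum_(i < n) y i| <= m.+1%:R^-1 + 2 / r%:R.
Proof.
move=> /andP[r2_le lt_r2] r0 sq_small.
rewrite -!(big_mkord xpredT) (big_cat_nat _ r2_le) //= big_mkord.
have tail : `|\sum_(r ^ 2 <= i < n) y i| <= 2 * r%:R.
  apply: le_trans (ler_norm_sum _ _ _) _.
  apply: le_trans (_ : \sum_(r ^ 2 <= i < n) (1 : R) <= _); first exact: ler_sum.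
  by rewrite sumr_const_nat -natrM ler_nat; nia.
have n0 : 0 < n%:R :> R by rewrite ltr0n (leq_trans _ r2_le)// expn_gt0 r0.
have r0R : 0 < r%:R :> R by rewrite ltr0n.
have r2n : (r ^ 2)%:R <= n%:R :> R by rewrite ler_nat.
rewrite normrM ger0_norm ?invr_ge0 ?ler0n// mulrC ler_pdivrMr //.
apply: le_trans (ler_normD _ _) _; apply: le_trans (lerD sq_small tail) _.
rewrite natrX in r2n *; rewrite [X in _ <= X]mulrDl; apply: lerD.
  by rewrite [_ * n%:R]mulrC ler_pM2r // invr_gt0 ltr0n.
by rewrite -mulrA ler_pM2l // mulrC ler_pdivlMr.
Qed.

Lemma cesaro_cvg0_from_squares :
  (forall m : nat, exists K : nat, forall k : nat, (K <= k)%N ->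
     `|\sum_(i < k ^ 2) y i| <= (k ^ 2)%:R / m.+1%:R) ->
  (fun n : nat => n%:R^-1 * \sum_(i < n) y i) @ \oo --> 0.
Proof.
move=> squares_small; apply/cvgr0Pnorm_lt => e e0.
have [m m_small] : exists m : nat, m.+1%:R^-1 < e / 2.
  by have [m] := ltr_add_invr (divr_gt0 e0 (ltr0n R 2)); rewrite add0r; exists m.
have [l l_small] : exists l : nat, l.+1%:R^-1 < e / 4.
  by have [l] := ltr_add_invr (divr_gt0 e0 (ltr0n R 4)); rewrite add0r; exists l.
have [K sq_small] := squares_small m.
pose M := maxn K l.+1.
exists (M ^ 2)%N => // n /= Mn; have [r r_br] := nat_sqr_bracket n.
have Mr : (M <= r)%N.
  case/andP: r_br => _ lt_r; rewrite leqNgt; apply/negP => rM.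
  by move: (leq_ltn_trans Mn lt_r); rewrite ltn_exp2r// ltnS leqNgt rM.
have r0 : (0 < r)%N by move: Mr; rewrite /M; lia.
have Kr : (K <= r)%N by move: Mr; rewrite /M; lia.
apply: le_lt_trans (average_between_squares r_br r0 (sq_small r Kr)) _.
have inv_r : r%:R^-1 <= l.+1%:R^-1 :> R.
  by rewrite lef_pV2 ?posrE ?ltr0n// ler_nat; move: Mr; rewrite /M; lia.
set a := l.+1%:R^-1 in l_small inv_r; set b := r%:R^-1 in inv_r *.
set c := m.+1%:R^-1 in m_small *; lra.
Qed.

End cesaro_from_squares.

Lemma cesaro_average (R : realType) (u : nat -> R) (l : R) : u @ \oo --> l ->
  (fun n : nat => n%:R^-1 * \sum_(i < n) u i) @ \oo --> l.
Proof.
move=> u_cvg; rewrite -cvg_shiftS.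
have -> : [sequence n.+1%:R^-1 * \sum_(i < n.+1) u i]_n = arithmetic_mean u.
  by apply: funext => n; rewrite /arithmetic_mean /series /= big_mkord.
exact: cesaro.
Qed.

Lemma submartingale_measurable d (T : measurableType d) (R : realType)
    (P : probability T R) F (theta : nat -> T -> R) :
  submartingale P F theta -> forall n, measurable_fun setT (theta n).
Proof.
move=> [[_ [F_meas _]] [_ [adapted _]]] n _ B mB.
by rewrite setTI; exact/F_meas/adapted.
Qed.

Lemma prod_ord_pick (R : comNzRingType) n (J : pred nat) (f : nat -> R) i :
  (i < n)%N ->
  (forall l, (l < n)%N -> J l = (l == i)) -> \prod_(l < n | J l) f l = f i.
Proof.
move=> i_lt J_eq; rewrite (bigD1 (Ordinal i_lt)) ?J_eq//= big1 ?mulr1// => l.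
rewrite J_eq// => /andP[/eqP l_i]; suff -> : l = Ordinal i_lt by rewrite eqxx.
exact: val_inj.
Qed.

Section binary_product_disintegration.
Context d (T : measurableType d) (R : realType) (P : probability T R)
  (theta : nat -> T -> R) (X : nat -> T -> bool).
Hypotheses (theta_meas : forall n, measurable_fun setT (theta n))
  (theta01 : forall n w, 0 <= theta n w <= 1)
  (X_meas : forall n b, measurable (X n @^-1` [set b])).

Definition coin n w (s : bool) : R := if s then theta n w else 1 - theta n w.
Hypothesis X_disint : product_disintegration P X coin.

Definition Z i : T -> R := \1_(X i @^-1` [set true]).
Definition Y i w : R := Z i w - theta i w.

Lemma theta_bounded n : bounded_measurable (theta n).
Proof.
split=> //; exists 1 => w.
by have /andP[t0 t1] := theta01 n w; rewrite ger0_norm.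
Qed.

Lemma Z_bounded i : bounded_measurable (Z i).
Proof. exact: bounded_measurable_indic. Qed.

Lemma Y_bounded i : bounded_measurable (Y i).
Proof. by apply: bounded_measurableB; [exact: Z_bounded|exact: theta_bounded]. Qed.

#[local] Hint Resolve theta_bounded Z_bounded Y_bounded : bounded.

Lemma Z01 i w : 0 <= Z i w <= 1.
Proof. by rewrite /Z indicE; case: (_ \in _); rewrite ?lexx ?ler01. Qed.

Lemma Y_le1 i w : `|Y i w| <= 1.
Proof.
rewrite ler_norml /Y; have /andP[? ?] := Z01 i w; have /andP[? ?] := theta01 i w.
by apply/andP; split; lra.
Qed.

Lemma rmeas_coin n w (A : {set bool}) :
  rmeas (coin n w) A = (true \in A)%:R * theta n w + (false \in A)%:R * (1 - theta n w).
Proof.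
rewrite /rmeas big_mkcond big_bool /= /coin.
by case: (true \in A); case: (false \in A); rewrite /= ?mul1r ?mul0r ?add0r ?addr0.
Qed.

Lemma sigma_coin_measurable B : sigma_of coin B -> measurable B.
Proof.
apply: smallest_sub; first exact: sigma_algebra_measurable.
move=> _ [n [A [C [mC ->]]]]; rewrite -[_ @^-1` C]setTI.
apply: (_ : measurable_fun setT (fun w => rmeas (coin n w) A)) => //.
under eq_fun do rewrite rmeas_coin.
by apply: measurable_funD; apply: measurable_funM => //; exact: measurable_funB.
Qed.

Lemma sigma_coin_level k c : sigma_of coin [set w | c <= theta k w].
Proof.
apply: sub_gen_smallest; exists k, [set true]%SET, `[c, +oo[%classic.
split; first exact: measurable_itv.
apply/seteqP; split => w /=;
  by rewrite rmeas_coin !finset.in_set1 /= mul1r mul0r addr0 in_itv /= andbT.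
Qed.

Lemma sigma_coin_setT : sigma_of coin setT.
Proof. by move=> G [[G0 GD _] _]; have := GD _ G0; rewrite setD0. Qed.

Lemma disintegration_pattern (J : pred nat) n B : sigma_of coin B ->
  P (B `&` [set w | forall l, (l <= n)%N -> J l -> X l w]) =
  (\int[P]_(w in B) (\prod_(l < n.+1 | J l) theta l w)%:E)%E.
Proof.
move=> sB; have := X_disint n (fun l => if J l then [set true] else [set: bool])%SET sB.
have -> : [set w | forall l, (l <= n)%N ->
            X l w \in (fun l => if J l then [set true] else [set: bool])%SET l] =
          [set w | forall l, (l <= n)%N -> J l -> X l w].
  apply/seteqP; split => w /= Xw l ln.
    by move=> Jl; move: (Xw l ln); rewrite Jl finset.in_set1 => /eqP.
  by case: ifP => Jl; rewrite ?finset.in_setT// finset.in_set1 Xw.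
move=> ->; apply: eq_integral => w _; congr EFin; rewrite [RHS]big_mkcond.
apply: eq_bigr => l _; rewrite rmeas_coin.
by case: (J l); rewrite /= ?finset.in_set1 ?finset.in_setT /= ?mul0r ?addr0 !mul1r// addrC subrK.
Qed.

Lemma ZE i w : Z i w = (X i w == true)%:R.
Proof.
rewrite /Z indicE; case Xw: (X i w); first by rewrite mem_set.
by rewrite memNset //= Xw.
Qed.

Lemma Z_given_coin j B : sigma_of coin B ->
  \int[P]_x (\1_B x * Z j x) = \int[P]_x (\1_B x * theta j x).
Proof.
move=> sB; have mB := sigma_coin_measurable sB.
have := disintegration_pattern (pred1 j) j sB.
have -> : [set w | forall l, (l <= j)%N -> pred1 j l -> X l w] = X j @^-1` [set true].
  by apply/seteqP; split => w /= Xw; [exact: Xw | move=> l _ /eqP ->].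
under eq_integral => w _ do rewrite (@prod_ord_pick _ j.+1 _ (theta^~ w) j)//.
rewrite integral_setE// -Rintegral_indic; last exact: measurableI.
by rewrite indicI => eq_int; apply: EFin_inj; rewrite -eq_int.
Qed.

Lemma Z_pair i j : (i < j)%N ->
  \int[P]_x (Z i x * Z j x) = \int[P]_x (theta i x * theta j x).
Proof.
move=> ij; pose J l := (l == i) || (l == j).
have := disintegration_pattern J j sigma_coin_setT; rewrite setTI.
have -> : [set w | forall l, (l <= j)%N -> J l -> X l w] =
          X i @^-1` [set true] `&` X j @^-1` [set true].
  apply/seteqP; split => w /= Xw; first by split; apply: Xw; rewrite /J ?eqxx ?orbT// ltnW.
  by move=> l _ /orP[] /eqP ->; case: Xw.
under eq_integral => w _.
  rewrite big_mkcond big_ord_recr -big_mkcond /= {2}/J eqxx orbT.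
  rewrite (@prod_ord_pick _ j _ (theta^~ w) i) => [|//|l lj]; last first.
    by rewrite /J (ltn_eqF lj) orbF.
  over.
rewrite -Rintegral_indic ?Rintegral_EFin//; last exact: measurableI.
by rewrite indicI => eq_int; apply: EFin_inj; rewrite -eq_int.
Qed.

(* Since theta_k is sigma(coin)-measurable, it may be pulled out of the
   conditional probability of X_j = 1. *)
Lemma theta_Z k j :
  \int[P]_x (theta k x * Z j x) = \int[P]_x (theta k x * theta j x).
Proof.
apply: Rintegral_mul_level_sets => //; first exact: Z01.
by move=> c; apply: Z_given_coin; exact: sigma_coin_level.
Qed.

Lemma Y_orthogonal i j : i != j -> \int[P]_x (Y i x * Y j x) = 0.
Proof.
wlog ij : i j / (i < j)%N.
  move=> ortho; rewrite neq_ltn => /orP[ij|ji]; first by apply: ortho; rewrite // ltn_eqF.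
  under eq_Rintegral do rewrite mulrC.
  by apply: ortho => //; rewrite ltn_eqF.
move=> _; have expand w : Y i w * Y j w =
    (Z i w * Z j w - theta j w * Z i w) - (theta i w * Z j w - theta i w * theta j w).
  by rewrite /Y; ring.
under eq_Rintegral do rewrite expand.
rewrite !Rintegral_boundedB// Z_pair// !theta_Z.
under [X in _ - X - _]eq_Rintegral do rewrite mulrC.
by rewrite !subrr.
Qed.

Definition S n w : R := \sum_(i < n) Y i w.

Lemma S_bounded n : bounded_measurable (S n).
Proof. exact: bounded_measurable_sum. Qed.

(* By orthogonality, the second moment of S_n is at most n. *)
Lemma S_second_moment n : \int[P]_x (S n x ^+ 2) <= n%:R.
Proof.
have expand w : S n w ^+ 2 = \sum_(i < n) \sum_(j < n) Y i w * Y j w.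
  by rewrite expr2 /S mulr_suml; apply: eq_bigr => i _; rewrite mulr_sumr.
under eq_Rintegral do rewrite expand.
rewrite Rintegral_bounded_sum// -[n in X in _ <= X]card_ord -sumr_const.
apply: ler_sum => i _; rewrite Rintegral_bounded_sum// (bigD1 i)//= big1 ?addr0.
  rewrite -[X in _ <= X](Rintegral_probability_cst P); apply: le_Rintegral_bounded => // w.
  by rewrite -expr2 -real_normK ?num_real// expr_le1// Y_le1.
by move=> j ji; apply: Y_orthogonal; rewrite eq_sym.
Qed.

Definition deviation (m k : nat) : set T :=
  [set w | (k.+1 ^ 2)%:R / m.+1%:R <= `|S (k.+1 ^ 2) w|].

Lemma deviation_measurable m k : measurable (deviation m k).
Proof.
by apply: measurable_level; apply: measurableT_comp => //; exact: (S_bounded _).1.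
Qed.

(* Chebyshev's inequality with the second-moment bound. *)
Lemma deviation_prob m k :
  (P (deviation m k) <= (m.+1%:R ^+ 2 / k.+1%:R ^+ 2)%:E)%E.
Proof.
set N := (k.+1 ^ 2)%N; have N0 : 0 < N%:R :> R by rewrite ltr0n expn_gt0.
have m0 : 0 < m.+1%:R :> R by rewrite ltr0n.
apply: le_trans (chebyshev_bounded P (divr_gt0 N0 m0) (S_bounded N)) _.
rewrite lee_fin ler_pdivrMr ?exprn_gt0 ?divr_gt0//.
suff -> : m.+1%:R ^+ 2 / k.+1%:R ^+ 2 * (N%:R / m.+1%:R) ^+ 2 = N%:R :> R.
  exact: S_second_moment.
by rewrite /N natrX; field; rewrite !gt_eqF// ltr0n.
Qed.

(* By Borel-Cantelli along the squares, the averages of Y vanish a.s. *)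
Lemma Y_average_cvg0 :
  {ae P, forall w, (fun n : nat => n%:R^-1 * \sum_(i < n) Y i w) @ \oo --> 0}.
Proof.
have null m : P (lim_sup_set (deviation m)) = 0%E.
  apply: lim_sup_set_cvg0; first exact: deviation_measurable.
  apply: (nneseries_inv_sqr_lty (sqr_ge0 m.+1%:R)) => k.
  by rewrite measure_ge0 deviation_prob.
have null_union : P.-negligible (\bigcup_m lim_sup_set (deviation m)).
  apply: negligible_bigcup => m; apply/negligibleP; last exact: null.
  by apply: bigcap_measurable => // n _; apply: bigcup_measurable => j _;
     exact: deviation_measurable.
apply: (negligibleS _ null_union) => w /= not_cvg; apply: contrapT => not_dev.
apply: not_cvg; apply: (cesaro_cvg0_from_squares (fun i => Y_le1 i w)).
move=> m; have [n not_dev_n] : exists n,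
    ~ (\bigcup_(j in [set j | (n <= j)%N]) deviation m j) w.
  by apply/existsNP => dev_n; apply: not_dev; exists m => // n _; exact: dev_n.
exists n.+1 => -[//|k] nk; apply/ltW; rewrite ltNge; apply/negP => dev_k.
by apply: not_dev_n; exists k.
Qed.

End binary_product_disintegration.

Theorem mainTheorem5 (d : measure_display) (T : measurableType d) (R : realType)
  (P : probability T R) (F : nat -> set (set T))
  (theta : nat -> T -> R) (theta_inf : T -> R) (X : nat -> T -> bool) :
  submartingale P F theta ->
  (forall n w, 0 <= theta n w <= 1) ->
  {ae P, forall w, theta^~ w @ \oo --> theta_inf w} ->
  (forall n (b : bool), measurable (X n @^-1` [set b])) ->
  product_disintegration P X
    (fun n w (s : bool) => if s then theta n w else 1 - theta n w) ->
  {ae P, forall w,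
     (fun n : nat => (n%:R)^-1 * \sum_(i < n) ((X i w == true)%:R : R))
       @ \oo --> theta_inf w}.
Proof.
move=> theta_sub theta01 theta_cvg X_meas X_disint.
have Y_cvg := Y_average_cvg0 (submartingale_measurable theta_sub) theta01 X_meas X_disint.
apply: filterS2 Y_cvg theta_cvg => w Y_w theta_w.
have -> : (fun n : nat => n%:R^-1 * \sum_(i < n) ((X i w == true)%:R : R)) =
    (fun n : nat => n%:R^-1 * \sum_(i < n) Y theta X i w) \+
    (fun n : nat => n%:R^-1 * \sum_(i < n) theta i w).
  apply: funext => n /=; rewrite -mulrDr -big_split /=.
  by congr (_ * _); apply: eq_bigr => i _; rewrite /Y ZE subrK.
by rewrite -[theta_inf w]add0r; exact: cvgD Y_w (cesaro_average theta_w).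
Qed.
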